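(* Let $\mathbb{Q}$ be the rationals and $A,B\subseteq\mathbb{Q}$. The following are equivalent: (i) the crisp context $(A,B,\leq)$ is a reduct of $(\mathbb{Q},\mathbb{Q},\leq)$ in FCA; (ii) the crisp context $(A,B,\not\leq)$ is a reduct of $(\mathbb{Q},\mathbb{Q},\not\leq)$ in RST; (iii) both $A$ and $B$ are dense in $\mathbb{Q}$ (with respect to the usual order topology, i.e. each meets every nonempty open interval of $\mathbb{Q}$).
   Context: Crisp contexts are $L$-contexts for $L=\{0,1\}$ with $*=\wedge$; a context is a triple $(X,Y,R)$ with $R\subseteq X\times Y$, and subsets of $X$ are identified with maps $X\to\{0,1\}$. $(A,B,\le)$ denotes $(A,B,R)$ with $R=\{(a,b)\in A\times B\mid a\le b\}$, and $\not\le$ its complement. For $U\subseteq X$, $V\subseteq Y$: $R^\uparrow U=\{y\mid\forall x\in U,(x,y)\in R\}$, $R^\downarrow V=\{x\mid\forall y\in V,(x,y)\in R\}$, $R^\exists U=\{y\mid\exists x\in U,(x,y)\in R\}$, $R^\forall V=\{x\mid\forall y,(x,y)\in R\Rightarrow y\in V\}$. $\mathcal{M}R=\{U\mid R^\downarrow R^\uparrow U=U\}$, $\mathcal{K}R=\{U\mid R^\forall R^\exists U=U\}$. For $X'\subseteq X$, $Y'\subseteq Y$, $R_{X',Y'}=R\cap(X'\times Y')$. $(X',Y',R_{X',Y'})$ is a reduct of $(X,Y,R)$ in FCA if the map $\mathcal{M}R_{X',Y'}\to\mathcal{M}R$, $U'\mapsto R^\downarrow R^\uparrow U'$, is an order isomorphism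 (with respect to inclusion); it is a reduct in RST if the map $\mathcal{K}R_{X',Y'}\to\mathcal{K}R$, $U'\mapsto R^\forall R^\exists U'$, is an order isomorphism. *)

From mathcomp Require Import all_boot all_order all_algebra.
Set Implicit Arguments. Unset Strict Implicit. Unset Printing Implicit Defensive.
Import Order.TTheory GRing.Theory Num.Theory.

(* A crisp context (X, Y, R): X : objects, Y : attributes (as subsets of
   ambient types T, S), R : incidence relation. *)

Definition subset {T : Type} (U V : T -> Prop) : Prop := forall x, U x -> V x.

Definition restr {T S : Type} (X : T -> Prop) (Y : S -> Prop) (R : T -> S -> Prop)
  : T -> S -> Prop := fun x y => X x /\ Y y /\ R x y.

Definition up {T S : Type} (X : T -> Prop) (Y : S -> Prop) (R : T -> S -> Prop)
  (U : T -> Prop) : S -> Prop := fun y => Y y /\ forall x, X x -> U x -> R x y.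
Definition down {T S : Type} (X : T -> Prop) (Y : S -> Prop) (R : T -> S -> Prop)
  (V : S -> Prop) : T -> Prop := fun x => X x /\ forall y, Y y -> V y -> R x y.
Definition exi {T S : Type} (X : T -> Prop) (Y : S -> Prop) (R : T -> S -> Prop)
  (U : T -> Prop) : S -> Prop := fun y => Y y /\ exists x, X x /\ U x /\ R x y.
Definition allop {T S : Type} (X : T -> Prop) (Y : S -> Prop) (R : T -> S -> Prop)
  (V : S -> Prop) : T -> Prop := fun x => X x /\ forall y, Y y -> R x y -> V y.

Definition inM {T S : Type} (X : T -> Prop) (Y : S -> Prop) (R : T -> S -> Prop)
  (U : T -> Prop) : Prop := subset U X /\ down X Y R (up X Y R U) = U.
Definition inK {T S : Type} (X : T -> Prop) (Y : S -> Prop) (R : T -> S -> Prop)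
  (U : T -> Prop) : Prop := subset U X /\ allop X Y R (exi X Y R U) = U.

Definition order_iso {T : Type} (P1 P2 : (T -> Prop) -> Prop)
  (f : (T -> Prop) -> (T -> Prop)) : Prop :=
  (forall U, P1 U -> P2 (f U)) /\
  (forall U1 U2, P1 U1 -> P1 U2 -> (subset U1 U2 <-> subset (f U1) (f U2))) /\
  (forall W, P2 W -> exists2 U, P1 U & f U = W).

Definition reduct_FCA {T S : Type} (X : T -> Prop) (Y : S -> Prop)
  (R : T -> S -> Prop) (X' : T -> Prop) (Y' : S -> Prop) : Prop :=
  order_iso (inM X' Y' (restr X' Y' R)) (inM X Y R)
            (fun U' => down X Y R (up X Y R U')).

Definition reduct_RST {T S : Type} (X : T -> Prop) (Y : S -> Prop)
  (R : T -> S -> Prop) (X' : T -> Prop) (Y' : S -> Prop) : Prop :=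
  order_iso (inK X' Y' (restr X' Y' R)) (inK X Y R)
            (fun U' => allop X Y R (exi X Y R U')).

Definition dense_rat (A : rat -> Prop) : Prop :=
  forall a b : rat, (a < b)%R -> exists x, A x /\ (a < x)%R /\ (x < b)%R.

Definition fullset {T : Type} : T -> Prop := fun _ => True.
Definition rle : rat -> rat -> Prop := fun x y => (x <= y)%R.
Definition rnle : rat -> rat -> Prop := fun x y => ~ (x <= y)%R.

(* The closure operators of a context and of its complement coincide
   (R^down R^up U x says "x is below every common R-bound of U", and
   R^forall R^exists U x is its contrapositive for the complement), so the FCA
   and RST reduct conditions are literally the same statement.  In (Q,Q,<=) the
   closure of U is the set of lower bounds of the upper bounds of U.  If A and B
   are dense, U' |-> cl U' has inverse W |-> A ∩ W.  Conversely, surjectivity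
   onto the principal closed set (-oo,q] for q in (a,b) produces a point of A in
   (a,b), and order reflection for two such sets (-oo,q1] ⊂ (-oo,q2] produces a
   point of B separating them. *)
From Pilot Require Import Defs.
From mathcomp Require Import all_boot all_order all_algebra.
From mathcomp Require Import lra.
From Stdlib Require Import Classical FunctionalExtensionality PropExtensionality.
Set Implicit Arguments. Unset Strict Implicit. Unset Printing Implicit Defensive.
Import Order.TTheory GRing.Theory Num.Theory.
Local Open Scope ring_scope.

Lemma predext {T : Type} (P Q : T -> Prop) : (forall x, P x <-> Q x) -> P = Q.
Proof.
move=> PQ; apply: functional_extensionality => x.
exact: propositional_extensionality.
Qed.

Section Closures.
Variables T S : Type.
Implicit Types (X : T -> Prop) (Y : S -> Prop) (R Rc : T -> S -> Prop) (U W : T -> Prop).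

Lemma down_up_restrP X Y R U x :
  down X Y (restr X Y R) (up X Y (restr X Y R) U) x <->
  X x /\ forall y, Y y -> (forall u, X u -> U u -> R u y) -> R x y.
Proof.
split=> -[Xx bounded]; split=> // y Yy.
- move=> ubU; suff [_ [_ //]] : restr X Y R x y.
  by apply: bounded => //; split=> // u Xu Uu; do 2!split=> //; exact: ubU.
- move=> [_ ubU]; do 2!split=> //; apply: bounded => // u Xu Uu.
  by have [_ []] := ubU u Xu Uu.
Qed.

Lemma down_up_fullP R U x :
  down fullset fullset R (up fullset fullset R U) x <->
  forall y, (forall u, U u -> R u y) -> R x y.
Proof.
split=> [[_ bounded] y ubU | bounded].
  by apply: bounded => //; split=> // u _; exact: ubU.
by split=> // y _ [_ ubU]; apply: bounded => u Uu; exact: ubU.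
Qed.

Lemma down_up_full_ext R U x : U x -> down fullset fullset R (up fullset fullset R U) x.
Proof. by move=> Ux; apply/down_up_fullP => y; apply. Qed.

Lemma down_up_full_sub R U W : Defs.subset U W ->
  Defs.subset (down fullset fullset R (up fullset fullset R U))
              (down fullset fullset R (up fullset fullset R W)).
Proof.
move=> UW x /down_up_fullP clUx; apply/down_up_fullP => y ubW.
by apply: clUx => u /UW; exact: ubW.
Qed.

Lemma down_up_full_idem R U :
  down fullset fullset R (up fullset fullset R
    (down fullset fullset R (up fullset fullset R U))) =
  down fullset fullset R (up fullset fullset R U).
Proof.
apply: predext => x; rewrite !down_up_fullP; split=> clx y ubU; apply: clx.
- by move=> u /down_up_fullP; apply.
- by move=> u Uu; apply: ubU; exact: down_up_full_ext.
Qed.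

Lemma down_up_restr_of_full X Y R U x : Defs.subset U X -> X x ->
  down fullset fullset R (up fullset fullset R U) x ->
  down X Y (restr X Y R) (up X Y (restr X Y R) U) x.
Proof.
move=> UX Xx /down_up_fullP clx; apply/down_up_restrP; split=> // y _ ubU.
by apply: clx => u Uu; apply: ubU (UX u Uu) Uu.
Qed.

Lemma down_up_compl X Y R Rc U :
  (forall x y, X x -> Y y -> (Rc x y <-> ~ R x y)) ->
  down X Y R (up X Y R U) = allop X Y Rc (exi X Y Rc U).
Proof.
move=> RcE; apply: predext => x; split=> -[Xx bounded]; split=> // y Yy.
- move=> /(RcE _ _ Xx Yy) nRxy; split=> //; apply: NNPP => noU; apply: nRxy.
  apply: bounded => //; split=> // u Xu Uu; apply: NNPP => /(RcE _ _ Xu Yy) Rcuy.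
  by apply: noU; exists u.
- move=> [_ ubU]; apply: NNPP => /(RcE _ _ Xx Yy) /(bounded y Yy) [_ [u [Xu [Uu]]]].
  by move/(RcE _ _ Xu Yy); apply; exact: ubU.
Qed.

Lemma reduct_FCA_RST_compl X Y R Rc (X' : T -> Prop) (Y' : S -> Prop) :
  (forall x y, Rc x y <-> ~ R x y) ->
  reduct_FCA X Y R X' Y' = reduct_RST X Y Rc X' Y'.
Proof.
move=> RcE.
have clE : forall U, down X Y R (up X Y R U) = allop X Y Rc (exi X Y Rc U).
  by move=> U; apply: down_up_compl.
have clE' : forall U, down X' Y' (restr X' Y' R) (up X' Y' (restr X' Y' R) U) =
                      allop X' Y' (restr X' Y' Rc) (exi X' Y' (restr X' Y' Rc) U).
  move=> U; apply: down_up_compl => x y Xx Yy /=.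
  split=> [[_ [_ /RcE nR]] [_ [_]] // | nR]; do 2!split=> //.
  by apply/RcE => Rxy; apply: nR.
rewrite /reduct_FCA /reduct_RST.
have -> : inM X Y R = inK X Y Rc by apply: predext => U; rewrite /inM /inK clE.
have -> : inM X' Y' (restr X' Y' R) = inK X' Y' (restr X' Y' Rc).
  by apply: predext => U; rewrite /inM /inK clE'.
by congr order_iso; apply: functional_extensionality.
Qed.

End Closures.

Notation clQ U := (down fullset fullset rle (up fullset fullset rle U)).
Notation clAB A B U := (down A B (restr A B rle) (up A B (restr A B rle) U)).

Section RationalClosures.
Implicit Types (A B U W : rat -> Prop).

Lemma clQ_le q : clQ (fun x => x <= q) = (fun x => x <= q).
Proof.
apply: predext => x; rewrite down_up_fullP; split; first by apply.
by move=> xq y ubq; exact: le_trans xq (ubq q (lexx q)).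
Qed.

Lemma clQ_gt U x y : clQ U x -> y < x -> exists2 u, U u & y < u.
Proof.
move=> /down_up_fullP clx yx; apply: NNPP => noU.
have : x <= y.
  by apply: clx => u Uu; rewrite /rle leNgt; apply/negP => yu; apply: noU; exists u.
by rewrite leNgt yx.
Qed.

Lemma clQ_closed_down W x y : clQ W = W -> W x -> y <= x -> W y.
Proof.
move=> <- /down_up_fullP clx yx; apply/down_up_fullP => z ubW.
exact: le_trans yx (clx z ubW).
Qed.

Lemma clAB_sep A B U u : A u -> ~ clAB A B U u ->
  exists y, [/\ B y, forall v, A v -> U v -> v <= y & y < u].
Proof.
move=> Au /down_up_restrP notcl; apply: NNPP => nosep.
apply: notcl; split=> // y By ubU.
by rewrite /rle leNgt; apply/negP => yu; apply: nosep; exists y.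
Qed.

Lemma clAB_trace A B W : dense_rat B -> clQ W = W ->
  clAB A B (fun x => A x /\ W x) = (fun x => A x /\ W x).
Proof.
move=> denseB closedW; apply: predext => x; rewrite down_up_restrP.
split=> [[Ax bounded] | [Ax Wx]]; last by split=> // y _; apply.
split=> //; rewrite -closedW; apply/down_up_fullP => z ubW.
rewrite /rle leNgt; apply/negP => zx; have [b [Bb [zb bx]]] := denseB _ _ zx.
have : x <= b by apply: bounded => // u _ [_ Wu]; exact: le_trans (ubW u Wu) (ltW zb).
by rewrite leNgt bx.
Qed.

Lemma clQ_trace A W : dense_rat A -> clQ W = W -> clQ (fun x => A x /\ W x) = W.
Proof.
move=> denseA closedW; apply: predext => x; split.
  by rewrite -{2}closedW; apply: down_up_full_sub => u [].
move=> Wx; apply/down_up_fullP => y ubAW; rewrite /rle leNgt; apply/negP => yx.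
have [a [Aa [ya ax]]] := denseA _ _ yx.
have : a <= y by apply: ubAW; split=> //; exact: clQ_closed_down closedW Wx (ltW ax).
by rewrite leNgt ya.
Qed.

End RationalClosures.

Section Reducts.
Variables A B : rat -> Prop.

Lemma reduct_FCA_of_dense :
  dense_rat A -> dense_rat B -> reduct_FCA fullset fullset rle A B.
Proof.
move=> denseA denseB; split; [|split].
- by move=> U _; split=> //; exact: down_up_full_idem.
- move=> U1 U2 [U1A _] [U2A closedU2]; split; first exact: down_up_full_sub.
  move=> cl12 x U1x; rewrite -closedU2.
  exact: (down_up_restr_of_full B U2A (U1A x U1x) (cl12 x (down_up_full_ext rle U1x))).
- move=> W [_ closedW]; exists (fun x => A x /\ W x); last exact: clQ_trace.
  by split; [move=> x [] | exact: clAB_trace].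
Qed.

Section FromReduct.
Hypothesis FCA : reduct_FCA fullset fullset rle A B.

Lemma reduct_FCA_principal q :
  exists2 U, inM A B (restr A B rle) U & clQ U = (fun x => x <= q).
Proof. by case: FCA => _ [_]; apply; split=> //; exact: clQ_le. Qed.

Lemma reduct_FCA_dense_objects : dense_rat A.
Proof.
move=> a b ab; have [U [UA _] clU] := reduct_FCA_principal ((a + b) / 2).
have mid_cl : clQ U ((a + b) / 2) by rewrite clU.
have [u Uu au] : exists2 u, U u & a < u by apply: clQ_gt mid_cl _; lra.
have : u <= (a + b) / 2 by move: (down_up_full_ext rle Uu); rewrite clU.
by exists u; split; [exact: UA | split=> //; lra].
Qed.

Lemma reduct_FCA_dense_attributes : dense_rat B.
Proof.
move=> a b ab; pose q1 := (2 * a + b) / 3; pose q2 := (a + 2 * b) / 3.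
have [U1 M1 clU1] := reduct_FCA_principal q1.
have [U2 M2 clU2] := reduct_FCA_principal q2.
have [u U2u notU1u] : exists2 u, U2 u & ~ U1 u.
  apply: NNPP => notU2U1; have [_ [reflects _]] := FCA.
  have /(reflects _ _ M2 M1) : Defs.subset U2 U1.
    by move=> u U2u; apply: NNPP => ?; apply: notU2U1; exists u.
  by rewrite clU1 clU2 => /(_ q2 (lexx q2)); rewrite /q1 /q2; lra.
have [y [By ubU1 yu]] : exists y, [/\ B y, forall v, A v -> U1 v -> v <= y & y < u].
  by case: M2 => U2A _; apply: clAB_sep (U2A u U2u) _; case: M1 => _ ->.
have q1y : q1 <= y.
  have /down_up_fullP : clQ U1 q1 by rewrite clU1.
  by apply=> v U1v; case: M1 => U1A _; exact: ubU1 (U1A v U1v) U1v.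
have uq2 : u <= q2 by move: (down_up_full_ext rle U2u); rewrite clU2.
by exists y; rewrite /q1 /q2 in q1y uq2; split=> //; split; lra.
Qed.

End FromReduct.
End Reducts.

Theorem mainTheorem9 (A B : rat -> Prop) :
  (reduct_FCA fullset fullset rle A B <-> reduct_RST fullset fullset rnle A B) /\
  (reduct_RST fullset fullset rnle A B <-> dense_rat A /\ dense_rat B).
Proof.
have <- : reduct_FCA fullset fullset rle A B = reduct_RST fullset fullset rnle A B.
  exact: reduct_FCA_RST_compl.
split; [exact: iff_refl | split].
- move=> FCA; split.
  + exact: (@reduct_FCA_dense_objects A B FCA).
  + exact: (@reduct_FCA_dense_attributes A B FCA).
- by case; exact: reduct_FCA_of_dense.
Qed.
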